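(* For all integers $n\ge 4$ and $k\ge 0$, $$A_{n,k}\,b_n^{(k)}+B_{n,k}\,b_{n-1}^{(k)}+C_{n,k}\,b_{n-2}^{(k)}+D_{n,k}\,b_{n-3}^{(k)}+E_{n,k}\,b_{n-4}^{(k)}=0,$$ where $A_{n,k}=(n^2-(k+1)^2)(n^2-k^2)$, $B_{n,k}=-2n(2n-1)(n+k)(n-k-1)$, $C_{n,k}=-2n(n-1)\left(n^2-2n+3-3k(k+1)\right)$, $D_{n,k}=6n(n-1)(n-2)(2n-3)$, $E_{n,k}=9n(n-1)(n-2)(n-3)$.
   Context: Let $X(\theta)=1+2\cos\theta$ and, for $k\ge 0$, $\chi_k(\theta)=1+2\sum_{j=1}^{k}\cos(j\theta)$ (the character of the $(k+1)$-dimensional irreducible representation of the Lie algebra $A_1$). For $n\ge 0$ the integers $b_n^{(k)}$, $0\le k\le n$, are the unique coefficients with $X(\theta)^n=\sum_{k=0}^{n}b_n^{(k)}\chi_k(\theta)$ for all real $\theta$; set $b_n^{(k)}=0$ for $k>n$. *)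

From Stdlib Require Import Reals ZArith.
Open Scope R_scope.

Definition Xf (theta : R) : R := 1 + 2 * cos theta.

Fixpoint cos_sum (k : nat) (theta : R) : R :=
  match k with
  | O => 0
  | S k' => cos_sum k' theta + cos (INR (S k') * theta)
  end.

Definition chi (k : nat) (theta : R) : R := 1 + 2 * cos_sum k theta.

Definition is_b_table (b : nat -> nat -> Z) : Prop :=
  (forall (n : nat) (theta : R),
      (Xf theta) ^ n = sum_f_R0 (fun k => IZR (b n k) * chi k theta) n)
  /\ (forall n k : nat, (n < k)%nat -> b n k = 0%Z).

From Stdlib Require Import Reals ZArith Lia Lra.

(* Let T n j be the coefficient of x^j in
      (x^-1 + 1 + x)^n (j ranging over Z).  They are symmetric in j, satisfy
      the derivative identity  j T_{m+1}(j) = (m+1) (T_m(j-1) - T_m(j+1)),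
      and from it the two-term recurrence in n
        (n^2 - j^2) T_n(j) = n (2n-1) T_{n-1}(j) + 3 n (n-1) T_{n-2}(j).
   2. The table b.  Multiplying by sin(theta/2) turns chi_k into
      sin((k+1/2) theta); X^n sin(theta/2) expands on these sines with
      coefficients T_n(k) - T_n(k+1), and the sines sin((k+1/2) theta) are
      linearly independent, so  b_n^(k) = T_n(k) - T_n(k+1).
   3. The recurrence.  Writing R_j for the operator of the two-term
      recurrence, the operator of the theorem factors as R_{k+1} o R_k, and
      R_j, R_i commute; hence it kills both n |-> T_n(k) and n |-> T_n(k+1),
      and therefore their difference b_n^(k). *)

Section Trinomial.

Local Open Scope Z_scope.

(* The trinomial coefficient: coefficient of x^j in (x^-1 + 1 + x)^n. *)
Fixpoint trinomial (n : nat) (j : Z) : Z :=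
  match n with
  | O => if Z.eq_dec j 0 then 1 else 0
  | S m => trinomial m (j - 1) + trinomial m j + trinomial m (j + 1)
  end.

Lemma trinomial_out n : forall j, Z.of_nat n < Z.abs j -> trinomial n j = 0.
Proof.
  induction n as [|n IH]; intros j Hj; simpl.
  - destruct (Z.eq_dec j 0); [subst; simpl in Hj; lia | reflexivity].
  - rewrite Nat2Z.inj_succ in Hj. rewrite !IH; lia.
Qed.

(* (x^-1 + 1 + x)^n is invariant under x <-> x^-1. *)
Lemma trinomial_sym n : forall j, trinomial n (- j) = trinomial n j.
Proof.
  induction n as [|n IH]; intros j; simpl.
  - destruct (Z.eq_dec (- j) 0), (Z.eq_dec j 0); lia.
  - replace (- j - 1) with (- (j + 1)) by ring.
    replace (- j + 1) with (- (j - 1)) by ring.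
    rewrite !IH; ring.
Qed.

(* Coefficientwise form of x d/dx f^(m+1) = (m+1) f^m (x - x^-1),
   where f = x^-1 + 1 + x. *)
Lemma trinomial_deriv m : forall j,
  j * trinomial (S m) j = (Z.of_nat m + 1) * (trinomial m (j - 1) - trinomial m (j + 1)).
Proof.
  induction m as [|m IH]; intros j.
  - cbn [trinomial Z.of_nat].
    destruct (Z.eq_dec (j - 1) 0), (Z.eq_dec j 0), (Z.eq_dec (j + 1) 0); lia.
  - pose proof (IH (j - 1)) as Hlo. pose proof (IH j) as Hmid. pose proof (IH (j + 1)) as Hhi.
    assert (Plo : trinomial (S m) (j - 1)
                  = trinomial m (j - 2) + trinomial m (j - 1) + trinomial m j).
    { cbn [trinomial]. now replace (j - 1 - 1) with (j - 2) by ring;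
      replace (j - 1 + 1) with j by ring. }
    assert (Phi : trinomial (S m) (j + 1)
                  = trinomial m j + trinomial m (j + 1) + trinomial m (j + 2)).
    { cbn [trinomial]. now replace (j + 1 + 1) with (j + 2) by ring;
      replace (j + 1 - 1) with j by ring. }
    replace (j - 1 - 1) with (j - 2) in Hlo by ring.
    replace (j - 1 + 1) with j in Hlo by ring.
    replace (j + 1 - 1) with j in Hhi by ring.
    replace (j + 1 + 1) with (j + 2) in Hhi by ring.
    change (trinomial (S (S m)) j) with
      (trinomial (S m) (j - 1) + trinomial (S m) j + trinomial (S m) (j + 1)).
    rewrite Nat2Z.inj_succ. unfold Z.succ. lia.
Qed.

Definition rec2 (j : Z) (u : nat -> Z) (n : nat) : Z :=
  let N := Z.of_nat n in
  (N ^ 2 - j ^ 2) * u n - N * (2 * N - 1) * u (n - 1)%nat - 3 * N * (N - 1) * u (n - 2)%nat.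

(* With n = m + 2,
   D0 the derivative identity at (n-1, j) and Dlo, Dhi those at (m, j -+ 1),
   the claim is  -j * D0 - n * (Dlo - Dhi)  once every coefficient is expanded
   down to level m by Pascal's rule. *)
Lemma trinomial_rec2 j n : (2 <= n)%nat -> rec2 j (fun m => trinomial m j) n = 0.
Proof.
  intros Hn. destruct n as [|[|m]]; [lia|lia|].
  unfold rec2. cbn [Nat.sub]. rewrite Nat.sub_0_r.
  replace (Z.of_nat (S (S m))) with (Z.of_nat m + 2) by lia.
  set (n := Z.of_nat m + 2).
  pose proof (trinomial_deriv (S m) j) as D0.
  pose proof (trinomial_deriv m (j - 1)) as Dlo.
  pose proof (trinomial_deriv m (j + 1)) as Dhi.
  assert (Pascal : forall i,
    trinomial (S m) i = trinomial m (i - 1) + trinomial m i + trinomial m (i + 1))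
    by reflexivity.
  replace (Z.of_nat (S m) + 1) with n in D0 by (unfold n; lia).
  replace (Z.of_nat m + 1) with (n - 1) in Dlo, Dhi by (unfold n; ring).
  change (trinomial (S (S m)) j) with
    (trinomial (S m) (j - 1) + trinomial (S m) j + trinomial (S m) (j + 1)) in *.
  rewrite !Pascal in *.
  replace (j - 1 - 1) with (j - 2) in * by ring.
  replace (j - 1 + 1) with j in * by ring.
  replace (j + 1 - 1) with j in * by ring.
  replace (j + 1 + 1) with (j + 2) in * by ring.
  apply (f_equal (Z.mul j)) in D0.
  apply (f_equal (Z.mul n)) in Dlo. apply (f_equal (Z.mul n)) in Dhi.
  lia.
Qed.

End Trinomial.

Section CharacterExpansion.

Local Open Scope R_scope.

Definition half_sine (k : nat) (theta : R) : R := sin ((INR k + / 2) * theta).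

Lemma sin_add_sub x y : sin (x + y) + sin (x - y) = 2 * sin x * cos y.
Proof. rewrite sin_plus, sin_minus. ring. Qed.

(* Telescoping: 2 sin(theta/2) cos(j theta) = s_j - s_(j-1). *)
Lemma chi_half_sine k theta : sin (theta / 2) * chi k theta = half_sine k theta.
Proof.
  unfold half_sine. induction k as [|k IH].
  - unfold chi; simpl.
    replace ((0 + / 2) * theta) with (theta / 2) by field. ring.
  - unfold chi in *. cbn [cos_sum].
    replace (sin (theta / 2) * (1 + 2 * (cos_sum k theta + cos (INR (S k) * theta))))
      with (sin (theta / 2) * (1 + 2 * cos_sum k theta)
            + 2 * sin (theta / 2) * cos (INR (S k) * theta)) by ring.
    rewrite IH, S_INR.
    replace ((INR k + 1 + / 2) * theta) with ((INR k + 1) * theta + theta / 2) by field.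
    replace ((INR k + / 2) * theta) with ((INR k + 1) * theta - theta / 2) by field.
    rewrite sin_plus, sin_minus. ring.
Qed.

(* Multiplication by X shifts the sines: X s_k = s_(k-1) + s_k + s_(k+1),
   where s_(-1) = - s_0, so that X s_0 = s_1. *)
Lemma Xf_half_sine_succ k theta :
  Xf theta * half_sine (S k) theta
  = half_sine k theta + half_sine (S k) theta + half_sine (S (S k)) theta.
Proof.
  unfold Xf, half_sine. rewrite !S_INR.
  replace ((INR k + 1 + 1 + / 2) * theta) with ((INR k + 1 + / 2) * theta + theta) by ring.
  replace ((INR k + / 2) * theta) with ((INR k + 1 + / 2) * theta - theta) by ring.
  pose proof (sin_add_sub ((INR k + 1 + / 2) * theta) theta). lra.
Qed.

Lemma Xf_half_sine_0 theta : Xf theta * half_sine 0 theta = half_sine 1 theta.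
Proof.
  unfold Xf, half_sine. simpl INR.
  replace ((1 + / 2) * theta) with (theta / 2 + theta) by field.
  replace ((0 + / 2) * theta) with (theta / 2) by field.
  pose proof (sin_add_sub (theta / 2) theta) as E.
  replace (theta / 2 - theta) with (- (theta / 2)) in E by field.
  rewrite sin_neg in E. lra.
Qed.

(* Coefficients of X * sum_k c_k s_k: c_(k-1) + c_k + c_(k+1), with the
   reflection c_(-1) = - c_0 built in at k = 0. *)
Definition triple_sum (c : nat -> R) (k : nat) : R :=
  match k with
  | O => c 1%nat
  | S i => c i + c (S i) + c (S (S i))
  end.

Lemma Xf_times_sum (c : nat -> R) theta N :
  Xf theta * sum_f_R0 (fun k => c k * half_sine k theta) N
  = sum_f_R0 (fun k => triple_sum c k * half_sine k theta) (S N)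
    - (c (S N) + c (S (S N))) * half_sine (S N) theta - c (S N) * half_sine N theta.
Proof.
  induction N as [|N IH].
  - simpl. rewrite <- Xf_half_sine_0. ring.
  - cbn [sum_f_R0]. cbn [sum_f_R0] in IH.
    rewrite Rmult_plus_distr_l, IH.
    replace (Xf theta * (c (S N) * half_sine (S N) theta))
      with (c (S N) * (Xf theta * half_sine (S N) theta)) by ring.
    rewrite Xf_half_sine_succ. simpl triple_sum. ring.
Qed.

Lemma cos_gt_m1 x : 0 <= x < PI -> -1 < cos x.
Proof.
  intros [H0 Hpi]. rewrite <- cos_PI.
  apply cos_decreasing_1; lra.
Qed.

Lemma half_sine_shift k theta h :
  half_sine k (theta + h) + half_sine k (theta - h)
  = 2 * cos ((INR k + / 2) * h) * half_sine k theta.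
Proof.
  unfold half_sine. rewrite Rmult_plus_distr_l, Rmult_minus_distr_l, sin_add_sub. ring.
Qed.

Lemma sine_sum_shift (c : nat -> R) N h :
  (forall theta, sum_f_R0 (fun k => c k * half_sine k theta) N = 0) ->
  forall theta,
    sum_f_R0 (fun k => c k * (2 * cos ((INR k + / 2) * h) + 2) * half_sine k theta) N = 0.
Proof.
  intros Hc theta.
  transitivity (sum_f_R0 (fun k => c k * half_sine k (theta + h)) N
                + sum_f_R0 (fun k => c k * half_sine k (theta - h)) N
                + 2 * sum_f_R0 (fun k => c k * half_sine k theta) N).
  - rewrite scal_sum, <- !plus_sum. apply sum_eq. intros k _.
    transitivity (c k * (half_sine k (theta + h) + half_sine k (theta - h)
                         + 2 * half_sine k theta)).
    + rewrite half_sine_shift. ring.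
    + ring.
  - rewrite !Hc. ring.
Qed.

(* With h = pi/(N + 1/2)
   the shift kills the top coefficient and keeps the others nonzero, so
   induction on N applies; the top coefficient is then read off at h/2. *)
Lemma half_sine_indep N : forall c : nat -> R,
  (forall theta, sum_f_R0 (fun k => c k * half_sine k theta) N = 0) ->
  forall k, (k <= N)%nat -> c k = 0.
Proof.
  induction N as [|N IH]; intros c Hc k Hk.
  - assert (k = O) by lia; subst. specialize (Hc PI). simpl in Hc.
    unfold half_sine in Hc. simpl INR in Hc.
    replace ((0 + / 2) * PI) with (PI / 2) in Hc by field.
    rewrite sin_PI2 in Hc. lra.
  - set (a := INR (S N) + / 2).
    assert (Ha : 0 < a) by (unfold a; pose proof (pos_INR (S N)); lra).
    set (h := PI / a).
    assert (Hh : 0 < h) by (unfold h; apply Rdiv_lt_0_compat; [apply PI_RGT_0 | lra]).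
    assert (Hah : a * h = PI) by (unfold h; field; lra).
    assert (Hlow : forall i, (i <= N)%nat -> c i = 0).
    { assert (Hw : forall i, (i <= N)%nat -> c i * (2 * cos ((INR i + / 2) * h) + 2) = 0).
      { apply IH. intros theta.
        pose proof (sine_sum_shift c (S N) h Hc theta) as E. cbn [sum_f_R0] in E.
        fold a in E. rewrite Hah, cos_PI in E. lra. }
      intros i Hi. specialize (Hw i Hi).
      assert (Hpos : 0 <= INR i + / 2) by (pose proof (pos_INR i); lra).
      assert (Hlt : INR i + / 2 < a) by (unfold a; apply Rplus_lt_compat_r, lt_INR; lia).
      assert (-1 < cos ((INR i + / 2) * h)).
      { apply cos_gt_m1. split; [nra|]. rewrite <- Hah. nra. }
      nra. }
    destruct (Nat.eq_dec k (S N)) as [->|Hne]; [|apply Hlow; lia].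
    specialize (Hc (h / 2)). cbn [sum_f_R0] in Hc.
    rewrite (sum_eq _ (fun _ => 0)) in Hc by (intros i Hi; rewrite Hlow by exact Hi; ring).
    unfold half_sine in Hc. fold a in Hc.
    replace (a * (h / 2)) with (PI / 2) in Hc by lra.
    rewrite sin_PI2, sum_cte in Hc. lra.
Qed.

Definition coef (n k : nat) : R :=
  IZR (trinomial n (Z.of_nat k) - trinomial n (Z.of_nat k + 1)).

(* Pascal's rule for the differences (using symmetry at k = 0). *)
Lemma coef_succ n k : triple_sum (coef n) k = coef (S n) k.
Proof.
  unfold coef. destruct k as [|i]; cbn [triple_sum]; rewrite <- ?plus_IZR; f_equal.
  - cbn [trinomial Z.of_nat]. simpl Z.add. simpl Z.sub.
    replace (trinomial n (-1)) with (trinomial n 1) by exact (eq_sym (trinomial_sym n 1)).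
    ring.
  - rewrite !Nat2Z.inj_succ. unfold Z.succ. set (x := Z.of_nat i). cbn [trinomial].
    replace (x + 1 - 1)%Z with x by ring.
    replace (x + 1 + 1 - 1)%Z with (x + 1)%Z by ring.
    replace (x + 1 + 1 + 1 - 1)%Z with (x + 1 + 1)%Z by ring.
    ring.
Qed.

Lemma coef_out n k : (n < k)%nat -> coef n k = 0.
Proof.
  intros Hk. unfold coef. rewrite !trinomial_out by lia. reflexivity.
Qed.

Lemma sine_expansion n theta :
  sin (theta / 2) * Xf theta ^ n = sum_f_R0 (fun k => coef n k * half_sine k theta) n.
Proof.
  induction n as [|n IH].
  - unfold coef, half_sine. simpl.
    replace ((0 + / 2) * theta) with (theta / 2) by field. ring.
  - replace (sin (theta / 2) * Xf theta ^ S n)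
      with (Xf theta * (sin (theta / 2) * Xf theta ^ n)) by (simpl; ring).
    rewrite IH, Xf_times_sum, !coef_out by lia.
    rewrite Rmult_0_l, Rplus_0_l, !Rmult_0_l, !Rminus_0_r.
    apply sum_eq. intros k _. rewrite coef_succ. reflexivity.
Qed.

Lemma b_table_trinomial (b : nat -> nat -> Z) (hb : is_b_table b) n k :
  b n k = (trinomial n (Z.of_nat k) - trinomial n (Z.of_nat k + 1))%Z.
Proof.
  destruct hb as [expansion vanish].
  destruct (Nat.le_gt_cases k n) as [Hk|Hk].
  - apply eq_IZR. fold (coef n k). apply Rminus_diag_uniq.
    revert k Hk. apply (half_sine_indep n (fun k => IZR (b n k) - coef n k)). intros theta.
    transitivity (sin (theta / 2) * sum_f_R0 (fun k => IZR (b n k) * chi k theta) n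
                  - sin (theta / 2) * Xf theta ^ n).
    + rewrite sine_expansion, scal_sum, <- minus_sum. apply sum_eq. intros k _.
      rewrite <- chi_half_sine. ring.
    + rewrite expansion. ring.
  - rewrite vanish, !trinomial_out by lia. reflexivity.
Qed.

End CharacterExpansion.

Section Recurrence.

Local Open Scope Z_scope.

Lemma rec2_vanish j u n :
  (forall m, (2 <= m)%nat -> u m = 0) -> (4 <= n)%nat -> rec2 j u n = 0.
Proof.
  intros Hu Hn. unfold rec2. rewrite !Hu by lia. ring.
Qed.

(* The two-term operators commute (their coefficients depend on j only
   through the leading term n^2 - j^2). *)
Lemma rec2_comm a c u n :
  (4 <= n)%nat -> rec2 a (rec2 c u) n = rec2 c (rec2 a u) n.
Proof.
  intros Hn. destruct n as [|[|[|[|p]]]]; try lia.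
  unfold rec2. cbn [Nat.sub]. rewrite !Nat.sub_0_r, !Nat2Z.inj_succ. ring.
Qed.

Definition rec4 (k : nat) (u : nat -> Z) (n : nat) : Z :=
  let N := Z.of_nat n in
  let K := Z.of_nat k in
  (N^2 - (K+1)^2) * (N^2 - K^2) * u n
   + (-2 * N * (2*N - 1) * (N + K) * (N - K - 1)) * u (n-1)%nat
   + (-2 * N * (N - 1) * (N^2 - 2*N + 3 - 3*K*(K+1))) * u (n-2)%nat
   + (6 * N * (N - 1) * (N - 2) * (2*N - 3)) * u (n-3)%nat
   + (9 * N * (N - 1) * (N - 2) * (N - 3)) * u (n-4)%nat.

Lemma rec4_factor k u n :
  (4 <= n)%nat -> rec4 k u n = rec2 (Z.of_nat k + 1) (rec2 (Z.of_nat k) u) n.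
Proof.
  intros Hn. destruct n as [|[|[|[|p]]]]; try lia.
  unfold rec4, rec2. cbn [Nat.sub]. rewrite !Nat.sub_0_r, !Nat2Z.inj_succ. ring.
Qed.

Lemma rec4_trinomial k n j :
  (4 <= n)%nat -> (j = Z.of_nat k \/ j = Z.of_nat k + 1) ->
  rec4 k (fun m => trinomial m j) n = 0.
Proof.
  intros Hn Hj. rewrite rec4_factor by exact Hn.
  destruct Hj as [-> | ->]; [|rewrite rec2_comm by exact Hn];
    apply rec2_vanish; auto; intros m Hm; apply trinomial_rec2; exact Hm.
Qed.

Lemma rec4_ext k u v n : (forall m, u m = v m) -> rec4 k u n = rec4 k v n.
Proof. intros Huv. unfold rec4. rewrite !Huv. reflexivity. Qed.

Lemma rec4_sub k u v n : rec4 k (fun m => u m - v m) n = rec4 k u n - rec4 k v n.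
Proof. unfold rec4. ring. Qed.

End Recurrence.

Theorem theorem4 (b : nat -> nat -> Z) (hb : is_b_table b) (n k : nat) (hn : (4 <= n)%nat) :
  let N := Z.of_nat n in
  let K := Z.of_nat k in
  ((N^2 - (K+1)^2) * (N^2 - K^2) * b n k
   + (-2 * N * (2*N - 1) * (N + K) * (N - K - 1)) * b (n-1)%nat k
   + (-2 * N * (N - 1) * (N^2 - 2*N + 3 - 3*K*(K+1))) * b (n-2)%nat k
   + (6 * N * (N - 1) * (N - 2) * (2*N - 3)) * b (n-3)%nat k
   + (9 * N * (N - 1) * (N - 2) * (N - 3)) * b (n-4)%nat k = 0)%Z.
Proof.
  change (rec4 k (fun m => b m k) n = 0%Z).
  rewrite (rec4_ext k _ (fun m => trinomial m (Z.of_nat k) - trinomial m (Z.of_nat k + 1))%Z)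
    by (intros m; apply b_table_trinomial, hb).
  rewrite rec4_sub, !rec4_trinomial by (auto || lia).
  reflexivity.
Qed.
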